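(* There is no deterministic algorithm with advice of constant size that performs leader election in all feasible graphs. That is, for every integer $b$, there is no deterministic leader election algorithm with advice together with an assignment of advice strings of length at most $b$ to feasible graphs such that, in every feasible graph, the algorithm with the assigned advice performs leader election (in some finite time).
   Context: A graph is a simple undirected connected finite graph whose nodes have no identifiers; at each node $v$ of degree $d$ the incident edges carry distinct port numbers $0,\dots,d-1$ (local to each node). The truncated view $\mathcal{V}^0(v)$ is a single node; $\mathcal{V}^{l+1}(v)$ is the port-labelled rooted tree whose root has, for every neighbour $v_i$ of $v$, a child $x_i$ joined by an edge carrying the same two port numbers as $\{v,v_i\}$ (the one at $v$ at the root side), and $x_i$ is the root of a copy of $\mathcal{V}^l(v_i)$. The augmented truncated view $\mathcal{B}^l(v)$ is $\mathcal{V}^l(v)$ with each leaf labelled by the degree in $G$ of the node it represents. A graph is feasible if for some $l$ the views $\mathcal{B}^l(v)$ of all nodes are pairwise distinct. Model (LOCAL): synchronous rounds, all nodes start simultaneously, in each round every node exchanges arbitrary messages with all neighbours and computes arbitrarily. Leader election: every node $v$ outputs a sequence $(p_1,q_1,\dots,p_k,q_k)$ of nonnegative integers describing a simple path starting at $v$ whose $i$-th edge has port $p_i$ at its endpoint closer to $v$ and $q_i$ at the other endpoint; all these paths must end at a common node. Advice: an oracle knowing the entire port-labelled graph gives the same binary string to all nodes before the start; its length is the size of advice. In a deterministic algorithm with advice, the actions/output of node $v$ in round $r$ are a function of the advice and of $\mathcal{B}^r(v)$. *)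

From mathcomp Require Import all_boot.
Set Implicit Arguments. Unset Strict Implicit. Unset Printing Implicit Defensive.

(* A port-labelled graph: nodes are 0, ..., pg_n - 1 (nodes carry no
   identifiers visible to the algorithm; the numbering is only for the
   oracle / the statement).  Node v has degree pg_deg v, and for a port
   p < pg_deg v, pg_nbr v p = (u, q) means that the edge at port p of v
   leads to node u, where it has port q. *)
Record pgraph := PGraph {
  pg_n   : nat;
  pg_deg : nat -> nat;
  pg_nbr : nat -> nat -> nat * nat
}.

(* The walk starting at v following the sequence (p1,q1,...,pk,qk):
   the i-th edge has port p_i at the end closer to v and q_i at the
   other end. *)
Fixpoint walk (G : pgraph) (v : nat) (s : seq nat) : option (seq nat) :=
  match s with
  | [::] => Some [:: v]
  | p :: q :: s' =>
      if (p < pg_deg G v) && ((pg_nbr G v p).2 == q) then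
        match walk G (pg_nbr G v p).1 s' with
        | Some w => Some (v :: w)
        | None => None
        end
      else None
  | _ => None
  end.

Definition well_formed (G : pgraph) : Prop :=
  0 < pg_n G /\
  (forall v p, v < pg_n G -> p < pg_deg G v ->
     let (u, q) := pg_nbr G v p in
     [/\ u < pg_n G, q < pg_deg G u, pg_nbr G u q = (v, p) & u <> v]) /\
  (forall v p1 p2, v < pg_n G -> p1 < pg_deg G v -> p2 < pg_deg G v ->
     (pg_nbr G v p1).1 = (pg_nbr G v p2).1 -> p1 = p2) /\
  (forall u v, u < pg_n G -> v < pg_n G ->
     exists s w, walk G u s = Some w /\ last u w = v).

(* Augmented truncated views: leaves are labelled by the degree of the
   node they represent; an internal node has the list of its children,
   in order of the port at the parent, each child edge labelled by
   (port at parent, port at child). *)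
Inductive view : Type :=
  | VLeaf : nat -> view
  | VNode : seq (nat * nat * view) -> view.

Fixpoint bview (G : pgraph) (l : nat) (v : nat) : view :=
  match l with
  | 0 => VLeaf (pg_deg G v)
  | l'.+1 =>
      VNode [seq (p, (pg_nbr G v p).2, bview G l' (pg_nbr G v p).1)
            | p <- iota 0 (pg_deg G v)]
  end.

Definition feasible (G : pgraph) : Prop :=
  well_formed G /\
  exists l, forall u v, u < pg_n G -> v < pg_n G ->
    bview G l u = bview G l v -> u = v.

(* A deterministic algorithm with advice: in round r, node v's action
   (here: whether it outputs, and what) is a function of the advice and
   of B^r(v) (and of r, known since all nodes start simultaneously).
   None = no output yet. *)
Definition algorithm := seq bool -> nat -> view -> option (seq nat).

Definition outputs (A : algorithm) (adv : seq bool) (G : pgraph) (v : nat)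
    (out : seq nat) : Prop :=
  exists r, A adv r (bview G r v) = Some out /\
    forall r', r' < r -> A adv r' (bview G r' v) = None.

Definition elects (A : algorithm) (adv : seq bool) (G : pgraph) : Prop :=
  exists leader, leader < pg_n G /\
    forall v, v < pg_n G ->
      exists out w, outputs A adv G v out /\
        walk G v out = Some w /\ uniq w /\ last v w = leader.

(* A binary word [w] is drawn as a port-labelled cycle of core nodes, one per
   letter, where a one subdivides the edge to the next core node and a zero
   hangs a leaf at its core node.  If [w] ends with a zero followed by a run
   of [m] ones, preceded by fewer than [m] letters starting with a zero, the
   graph is feasible: following port 0 leads every node to the core node
   before that run, which its view of depth [2m + 1] recognises, and the
   port-0 walk is reversible.

   Fix the algorithm and the advice bound [b].  Let [R] bound the round at
   which node 0 of the graph of [w] outputs, over all advice strings of length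
   at most [b] (the bound must not depend on the advice, which is chosen after
   the graphs).  Build words [w_0, w_1, ...] where [w_(n+1)] begins with
   [2R + 4] copies of [w_n].  Two of these graphs, say those of [w_i] and
   [w_j] with [i < j], get the same advice.  In the graph of [w_j] the core
   nodes starting copies [r + 1] and [r + 2] of [w_i], where [r <= R] is the
   round in which node 0 of the graph of [w_i] outputs, see exactly what that
   node sees up to round [r], hence output the same port sequence.  Reading a
   port sequence backwards from its endpoint recovers its source, so these two
   nodes cannot reach a common leader. *)

From mathcomp Require Import all_boot zify.
From Stdlib Require Import Classical ClassicalEpsilon.
Set Implicit Arguments. Unset Strict Implicit. Unset Printing Implicit Defensive.

Definition view_deg (V : view) : nat :=
  match V with VLeaf d => d | VNode s => size s end.

Lemma bview_deg G l v : view_deg (bview G l v) = pg_deg G v.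
Proof. by case: l => [|l] //=; rewrite size_map size_iota. Qed.

Lemma bview_eq_deg G H l u v :
  bview G l u = bview H l v -> pg_deg G u = pg_deg H v.
Proof. by move=> E; rewrite -(bview_deg G l u) -(bview_deg H l v) E. Qed.

Lemma bview_eq_nbr G H l u v p : bview G l.+1 u = bview H l.+1 v ->
  p < pg_deg G u ->
  (pg_nbr G u p).2 = (pg_nbr H v p).2 /\
  bview G l (pg_nbr G u p).1 = bview H l (pg_nbr H v p).1.
Proof.
move=> E hp; have hd := bview_eq_deg E.
move: E => /= [] /(congr1 (fun s => nth (0, 0, VLeaf 0) s p)).
rewrite !(nth_map 0) ?size_iota -?hd // !nth_iota -?hd //.
by case.
Qed.

Lemma walk_consE G v p q s w : walk G v [:: p, q & s] = Some w ->
  [/\ p < pg_deg G v, (pg_nbr G v p).2 = q &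
      exists2 w', walk G (pg_nbr G v p).1 s = Some w' & w = v :: w'].
Proof.
rewrite /=; case: ifP => // /andP [hp /eqP hq].
by case: (walk _ _ s) => // w' [<-]; split => //; exists w'.
Qed.

Lemma walk_ind G (P : nat -> seq nat -> seq nat -> Prop) :
  (forall v, P v [::] [:: v]) ->
  (forall v p s w, p < pg_deg G v -> walk G (pg_nbr G v p).1 s = Some w ->
     P (pg_nbr G v p).1 s w -> P v [:: p, (pg_nbr G v p).2 & s] (v :: w)) ->
  forall v s w, walk G v s = Some w -> P v s w.
Proof.
move=> Pnil Pcons v s; have [n] := ubnP (size s).
elim: n v s => // n IH v [|p [|q s]] //= hs w; first by move=> [<-].
move=> /walk_consE [hp <- [w' Ew' ->]].
by apply: Pcons => //; apply: IH Ew'; lia.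
Qed.

Lemma walk_head G v s w : walk G v s = Some w -> exists w', w = v :: w'.
Proof. by move: v s w; apply: walk_ind => [v|v p s w _ _ _]; eexists. Qed.

Lemma walk_last G v s w x : walk G v s = Some w -> last x w = last v w.
Proof. by move=> /walk_head [w' ->]. Qed.

Lemma well_formed_nbr G v p : well_formed G -> v < pg_n G -> p < pg_deg G v ->
  [/\ (pg_nbr G v p).1 < pg_n G, (pg_nbr G v p).2 < pg_deg G (pg_nbr G v p).1,
      pg_nbr G (pg_nbr G v p).1 (pg_nbr G v p).2 = (v, p) & (pg_nbr G v p).1 <> v].
Proof. by move=> [_ [H _]] hv hp; move: (H v p hv hp); case: (pg_nbr G v p). Qed.

(* A port sequence can be followed backwards, so it determines its source
   from its target. *)
Lemma walk_source_inj G s u v wu wv : well_formed G -> u < pg_n G -> v < pg_n G ->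
  walk G u s = Some wu -> walk G v s = Some wv -> last u wu = last v wv -> u = v.
Proof.
move=> wf + + Eu; move: u s wu Eu v wv.
apply: walk_ind => [u|u p s wu hp Eu IH] v wv hu hv.
  by case: wv => // x [|] //= [->].
move=> /walk_consE [hpv hq [wv' Ev ->]] /=.
rewrite (walk_last _ Eu) (walk_last _ Ev) => el.
have [nu _ Nu _] := well_formed_nbr wf hu hp.
have [nv _ Nv _] := well_formed_nbr wf hv hpv.
have e := IH _ _ nu nv Ev el.
by move: Nu Nv; rewrite -hq e => -> [].
Qed.

Definition reach G u v := exists s w, walk G u s = Some w /\ last u w = v.

Lemma reach_refl G u : reach G u u.
Proof. by exists [::], [:: u]. Qed.

Lemma reach_step G u v p :
  p < pg_deg G u -> reach G (pg_nbr G u p).1 v -> reach G u v.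
Proof.
move=> hp [s [w [Ew <-]]]; exists [:: p, (pg_nbr G u p).2 & s], (u :: w).
by rewrite /= hp eqxx Ew (walk_last _ Ew).
Qed.

Lemma reach_trans G u x v : reach G u x -> reach G x v -> reach G u v.
Proof.
move=> [s [w [Ew <-]]]; move: u s w Ew.
apply: walk_ind => [//|u p s w hp Ew IH] /=.
by rewrite (walk_last _ Ew) => /IH; apply: reach_step.
Qed.

Definition outputs_at (A : algorithm) adv G v r out :=
  A adv r (bview G r v) = Some out /\
  forall r', r' < r -> A adv r' (bview G r' v) = None.

Lemma outputs_at_uniq A adv G v r1 r2 o1 o2 :
  outputs_at A adv G v r1 o1 -> outputs_at A adv G v r2 o2 -> r1 = r2 /\ o1 = o2.
Proof.
move=> [E1 F1] [E2 F2]; case: (ltngtP r1 r2) => [h|h|e].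
- by rewrite F2 in E1.
- by rewrite F1 in E2.
- by move: E2; rewrite -e E1 => -[].
Qed.

Lemma outputs_uniq A adv G v o1 o2 :
  outputs A adv G v o1 -> outputs A adv G v o2 -> o1 = o2.
Proof. by move=> [r1 O1] [r2 O2]; have [] := outputs_at_uniq O1 O2. Qed.

Lemma outputs_of_bview_eq A adv G H x y r out :
  (forall r', r' <= r -> bview G r' x = bview H r' y) ->
  outputs_at A adv H y r out -> outputs A adv G x out.
Proof.
move=> E [Er Fr]; exists r; split; first by rewrite E.
by move=> r' lt; rewrite E ?Fr // ltnW.
Qed.

Lemma exists_uniform_bound (P : nat -> nat -> Prop) n :
  (forall u, u < n -> exists k, P u k) ->
  exists K, forall u, u < n -> exists2 k, k <= K & P u k.
Proof.
elim: n => [|n IH] H; first by exists 0.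
have [|K HK] := IH; first by move=> u hu; apply: H; lia.
have [k0 Hk0] := H n (ltnSn n).
exists (maxn K k0) => u; rewrite ltnS leq_eqVlt => /orP [/eqP ->|hu].
  by exists k0 => //; lia.
by have [k hk Pk] := HK u hu; exists k => //; lia.
Qed.

Definition next0 G v := (pg_nbr G v 0).1.

Section Next0.
Variable G : pgraph.
Hypothesis deg_pos : forall v, 0 < pg_deg G v.

Lemma reach_iter_next0 k v : reach G v (iter k (next0 G) v).
Proof.
elim: k v => [|k IH] v; first exact: reach_refl.
by rewrite iterSr; apply: reach_step (deg_pos v) _; apply: IH.
Qed.

Lemma bview_iter_next0 k l u v : bview G (k + l) u = bview G (k + l) v ->
  bview G l (iter k (next0 G) u) = bview G l (iter k (next0 G) v).
Proof.
elim: k u v => // k IH u v; rewrite addSn !iterSr => E; apply: IH.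
by have [] := bview_eq_nbr E (deg_pos u).
Qed.

Hypothesis wf : well_formed G.

Lemma iter_next0_lt k v : v < pg_n G -> iter k (next0 G) v < pg_n G.
Proof.
by elim: k => //= k IH hv; case: (well_formed_nbr wf (IH hv) (deg_pos _)).
Qed.

Lemma iter_next0_inj k l u v : u < pg_n G -> v < pg_n G ->
  bview G (k + l) u = bview G (k + l) v ->
  iter k (next0 G) u = iter k (next0 G) v -> u = v.
Proof.
elim: k u v => // k IH u v hu hv; rewrite addSn !iterSr => E Ek.
have [e1 e2] := bview_eq_nbr E (deg_pos u).
have [nu _ Nu _] := well_formed_nbr wf hu (deg_pos u).
have [nv _ Nv _] := well_formed_nbr wf hv (deg_pos v).
have ef : next0 G u = next0 G v by exact: IH nu nv e2 Ek.
by move: Nu Nv; rewrite e1; rewrite /next0 in ef; rewrite ef => -> [].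
Qed.

(* The port-0 walk is reversible, so the view of [u] deep enough to follow it
   to [z] and recognise [z] there identifies [u]. *)
Lemma feasible_of_anchor z d :
  (forall u, u < pg_n G -> exists k, iter k (next0 G) u = z) ->
  (forall x l, x < pg_n G -> d <= l -> bview G l x = bview G l z -> x = z) ->
  feasible G.
Proof.
move=> to_z z_view; split => //.
have [K HK] := exists_uniform_bound to_z.
exists (K + d) => u v hu hv E.
have [k hk Ek] := HK u hu.
have E' : bview G (k + (K - k + d)) u = bview G (k + (K - k + d)) v.
  by have -> : k + (K - k + d) = K + d by lia.
have Ev := bview_iter_next0 E'.
have ez : iter k (next0 G) v = z.
  apply: (z_view _ (K - k + d)); [exact: iter_next0_lt | lia | by rewrite -Ev Ek].
by apply: (iter_next0_inj hu hv E'); rewrite Ek ez.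
Qed.

End Next0.

Definition node (q : nat) (t : bool) : nat := t + q.*2.

Lemma node_half q t : (node q t)./2 = q.
Proof. exact: half_bit_double. Qed.

Lemma node_odd q t : odd (node q t) = t.
Proof. by rewrite /node oddD odd_double oddb addbF. Qed.

Lemma nodeK v : node v./2 (odd v) = v.
Proof. exact: odd_double_half. Qed.

Lemma node_inj q t q' t' : node q t = node q' t' -> q = q' /\ t = t'.
Proof. by move=> E; move: (congr1 half E) (congr1 odd E); rewrite !node_half !node_odd. Qed.

Lemma node_lt q t n : (node q t < n.*2) = (q < n).
Proof. by rewrite /node; case: t => /=; lia. Qed.

Section WordGraph.
Variable w : seq bool.
Local Notation L := (size w).

Definition letter q := nth false w q.
Definition cnext q := q.+1 %% L.
Definition cprev q := (q + L.-1) %% L.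

(* Node [node q false] is the core node of position [q] on a cycle of length
   [L].  If [letter q] holds, [node q true] subdivides the cycle edge from
   core [q] to core [cnext q]; otherwise it is a leaf hanging at core [q].
   Port 0 always leads forward along the cycle (or to the leaf), port 1 of a
   core node backward. *)
Definition wdeg v :=
  if odd v then (if letter v./2 then 2 else 1) else (if letter v./2 then 2 else 3).

Definition wnbr v i := let q := v./2 in
  if odd v then
    (if letter q then (if i == 0 then (node (cnext q) false, 1) else (node q false, 0))
     else (node q false, 2))
  else if i == 0 then
    (if letter q then (node q true, 1) else (node (cnext q) false, 1))
  else if i == 1 then (node (cprev q) (letter (cprev q)), 0)
  else (node q true, 0).

Definition wgraph := PGraph L.*2 wdeg wnbr.

Lemma wdegE q t : wdeg (node q t) =
  if t then (if letter q then 2 else 1) else (if letter q then 2 else 3).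
Proof. by rewrite /wdeg node_half node_odd. Qed.

Lemma wnbrE q t i : wnbr (node q t) i =
  if t then
    (if letter q then (if i == 0 then (node (cnext q) false, 1) else (node q false, 0))
     else (node q false, 2))
  else if i == 0 then
    (if letter q then (node q true, 1) else (node (cnext q) false, 1))
  else if i == 1 then (node (cprev q) (letter (cprev q)), 0)
  else (node q true, 0).
Proof. by rewrite /wnbr node_half node_odd. Qed.

Lemma wdeg_pos v : 0 < wdeg v.
Proof. by rewrite /wdeg; case: (odd v); case: (letter _). Qed.

Lemma next0_core q :
  next0 wgraph (node q false) = if letter q then node q true else node (cnext q) false.
Proof. by rewrite /next0 /= wnbrE; case: (letter q). Qed.

Lemma next0_leaf q :
  next0 wgraph (node q true) = if letter q then node (cnext q) false else node q false.
Proof. by rewrite /next0 /= wnbrE; case: (letter q). Qed.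

Lemma cnext_mod q : cnext (q %% L) = q.+1 %% L.
Proof. by rewrite /cnext -addn1 modnDml addn1. Qed.

Lemma cnext_lt q : q < L -> cnext q < L.
Proof. by move=> hq; rewrite /cnext ltn_mod; lia. Qed.

Lemma iter_next0_shift q k : q < L ->
  exists k', iter k' (next0 wgraph) (node q false) = node ((q + k) %% L) false.
Proof.
move=> hq; elim: k => [|k [k1 IH]]; first by exists 0; rewrite addn0 modn_small.
have [k2 E2] : exists k2, iter k2 (next0 wgraph) (node ((q + k) %% L) false) =
                          node ((q + k).+1 %% L) false.
  rewrite -cnext_mod; case Eb: (letter ((q + k) %% L)).
  - by exists 2; rewrite /= next0_core Eb next0_leaf Eb.
  - by exists 1; rewrite /= next0_core Eb.
by exists (k2 + k1); rewrite iterD IH E2 addnS.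
Qed.

Lemma iter_next0_to_core u q : u < L.*2 -> q < L ->
  exists k, iter k (next0 wgraph) u = node q false.
Proof.
rewrite -(nodeK u) node_lt; move: (u./2) (odd u) => p t hp hq.
have [k0 [p' hp' E0]] : exists k0, exists2 p', p' < L &
    iter k0 (next0 wgraph) (node p t) = node p' false.
  case: t; last by exists 0, p.
  exists 1; rewrite /= next0_leaf; case: (letter p); last by exists p.
  by exists (cnext p); rewrite // cnext_lt.
have [k E] := iter_next0_shift (q + L - p') hp'.
exists (k + k0); rewrite iterD E0 E.
have -> : p' + (q + L - p') = q + L by lia.
by rewrite modnDr modn_small.
Qed.

Hypothesis L_gt2 : 2 < L.

Lemma cnextE q : q < L -> cnext q = if q.+1 == L then 0 else q.+1.
Proof.
move=> hq; rewrite /cnext; case: eqP => [->|ne]; first by rewrite modnn.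
by rewrite modn_small //; lia.
Qed.

Lemma cprevE q : q < L -> cprev q = if q == 0 then L.-1 else q.-1.
Proof.
move=> hq; rewrite /cprev; case: eqP => [->|ne]; first by rewrite modn_small //; lia.
have -> : q + L.-1 = q.-1 + L by lia.
by rewrite modnDr modn_small //; lia.
Qed.

Lemma cprev_lt q : q < L -> cprev q < L.
Proof. by move=> hq; rewrite cprevE //; case: eqP; lia. Qed.

Lemma cprev_cnext q : q < L -> cprev (cnext q) = q.
Proof.
move=> hq; rewrite cprevE ?cnext_lt // cnextE //.
by case: (q.+1 =P L) => e; case: eqP; lia.
Qed.

Lemma cnext_cprev q : q < L -> cnext (cprev q) = q.
Proof.
move=> hq; rewrite cnextE ?cprev_lt // cprevE //.
by case: (q =P 0) => e; case: eqP; lia.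
Qed.

Lemma cnext_neq q : q < L -> cnext q <> q.
Proof. by move=> hq; rewrite cnextE //; case: eqP; lia. Qed.

Lemma cprev_neq q : q < L -> cprev q <> q.
Proof. by move=> hq; rewrite cprevE //; case: eqP; lia. Qed.

Lemma cnext_neq_cprev q : q < L -> cnext q <> cprev q.
Proof. by move=> hq; rewrite cnextE // cprevE //; case: (q.+1 =P L); case: (q =P 0); lia. Qed.

Lemma wgraph_nbr_sym v i : v < L.*2 -> i < wdeg v ->
  let (u, j) := wnbr v i in
  [/\ u < L.*2, j < wdeg u, wnbr u j = (v, i) & u <> v].
Proof.
rewrite -(nodeK v) node_lt; move: (v./2) (odd v) => q t hq.
have hn := cnext_lt hq; have hp := cprev_lt hq.
have neq_t q' : node q' (~~ t) <> node q t by move=> /node_inj [_]; case: t.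
have neq_q q' t' : q' <> q -> node q' t' <> node q t by move=> ne /node_inj [/ne].
rewrite wdegE wnbrE; case: t neq_t neq_q; case Eb: (letter q) => /= neq_t neq_q.
- case: i => [|[|i]] // _ /=; rewrite ?node_lt ?wdegE ?wnbrE /= ?cprev_cnext ?Eb //.
  by split => //; case: (letter _).
- by case: i => [|i] // _ /=; rewrite ?node_lt ?wdegE ?wnbrE /= ?Eb.
- case: i => [|[|i]] // _ /=; rewrite ?node_lt ?wdegE ?wnbrE /= ?cnext_cprev ?Eb //.
  case Eb': (letter (cprev q)) => /=; rewrite ?Eb' //.
  by split => //; apply: neq_q; exact: cprev_neq.
- case: i => [|[|[|i]]] // _ /=.
  all: rewrite ?node_lt ?wdegE ?wnbrE /= ?cprev_cnext ?cnext_cprev ?Eb //.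
  + by split => //; [case: (letter _) | apply: neq_q; exact: cnext_neq].
  + case Eb': (letter (cprev q)) => /=; rewrite ?Eb' //.
    by split => //; apply: neq_q; exact: cprev_neq.
Qed.

Lemma wgraph_simple v i1 i2 : v < L.*2 -> i1 < wdeg v -> i2 < wdeg v ->
  (wnbr v i1).1 = (wnbr v i2).1 -> i1 = i2.
Proof.
rewrite -(nodeK v) node_lt; move: (v./2) (odd v) => q t hq.
have h1 := cnext_neq hq; have h2 := cprev_neq hq; have h3 := cnext_neq_cprev hq.
rewrite wdegE !wnbrE; case: t; case: (letter q) => /=.
- case: i1 => [|[|i1]] //; case: i2 => [|[|i2]] //= _ _ /node_inj [] //; lia.
- by case: i1 => [|i1] //; case: i2 => [|i2].
- case: i1 => [|[|i1]] //; case: i2 => [|[|i2]] //= _ _ /node_inj [] //; lia.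
- case: i1 => [|[|[|i1]]] //; case: i2 => [|[|[|i2]]] //= _ _ /node_inj [] //; lia.
Qed.

Lemma reach_core_node q t : reach wgraph (node q false) (node q t).
Proof.
case: t; last exact: reach_refl.
apply: (@reach_step _ _ _ (if letter q then 0 else 2)); rewrite /= ?wdegE ?wnbrE;
  by case: (letter q) => //=; apply: reach_refl.
Qed.

Lemma wgraph_connected u v : u < L.*2 -> v < L.*2 -> reach wgraph u v.
Proof.
move=> hu hv; have hv' : v./2 < L by rewrite -(node_lt _ (odd v)) nodeK.
have [k Ek] := iter_next0_to_core hu hv'.
apply: reach_trans (@reach_iter_next0 wgraph wdeg_pos k u) _.
by rewrite Ek -{2}(nodeK v); apply: reach_core_node.
Qed.

Lemma wgraph_well_formed : well_formed wgraph.
Proof.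
split; first by rewrite /= double_gt0; lia.
split; first exact: wgraph_nbr_sym.
split; first exact: wgraph_simple.
exact: wgraph_connected.
Qed.

End WordGraph.

Lemma iter_next0_run w p j : ~~ letter w p ->
  (forall i, 0 < i <= j -> letter w ((p + i) %% size w)) ->
  iter j.*2.+1 (next0 (wgraph w)) (node p false) = node ((p + j).+1 %% size w) false.
Proof.
move=> hp; elim: j => [|j IH] run; first by rewrite /= next0_core (negbTE hp) addn0.
have -> : j.+1.*2.+1 = 2 + j.*2.+1 by lia.
rewrite iterD IH; last by move=> i hi; apply: run; lia.
have hb : letter w ((p + j).+1 %% size w) by rewrite -addnS; apply: run; lia.
by rewrite /= next0_core hb next0_leaf hb cnext_mod addnS.
Qed.

Section RunWord.
Variables (W : seq bool) (m : nat).
Hypothesis W_size : 0 < size W < m.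
Hypothesis W_head : head true W = false.
Local Notation w := (W ++ false :: nseq m true).
Local Notation s := (size W).
Local Notation G := (wgraph w).

Lemma size_run_word : size w = s + m.+1.
Proof. by rewrite size_cat /= size_nseq. Qed.

Lemma letter_anchor : letter w s = false.
Proof. by rewrite /letter nth_cat ltnn subnn. Qed.

Lemma letter0 : letter w 0 = false.
Proof. by rewrite /letter nth_cat; case: W W_size W_head => [|a W'] //= _ ->. Qed.

Lemma letter_run q : s < q < size w -> letter w q.
Proof.
rewrite size_run_word => /andP [h1 h2]; rewrite /letter nth_cat ltnNge ltnW //=.
have -> : q - s = (q - s).-1.+1 by lia.
by rewrite /= nth_nseq; case: ifP => //; lia.
Qed.

(* The only zero followed by [m] ones, cyclically, is the one at [s]:
   [W] is shorter than [m] and starts with a zero. *)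
Lemma run_start_uniq p : p < size w -> ~~ letter w p ->
  (forall i, 0 < i <= m -> letter w ((p + i) %% size w)) -> p = s.
Proof.
move=> hp hb run; case: (ltngtP p s) => // h.
- have hi : 0 < s - p <= m by lia.
  move: (run _ hi); rewrite (subnKC (ltnW h)) modn_small ?letter_anchor //.
  by rewrite size_run_word; lia.
- have hi : 0 < size w - p <= m by move: hp; rewrite size_run_word; lia.
  by move: (run _ hi); rewrite (subnKC (ltnW hp)) modnn letter0.
Qed.

Lemma bview_anchor_core q t l : bview G l (node q t) = bview G l (node s false) ->
  t = false /\ letter w q = false.
Proof.
move=> /bview_eq_deg /=; rewrite !wdegE letter_anchor.
by case: t; case: (letter w q).
Qed.

Lemma bview_anchor_run q l j : j <= m -> j.*2.+1 <= l -> ~~ letter w q ->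
  bview G l (node q false) = bview G l (node s false) ->
  forall i, 0 < i <= j -> letter w ((q + i) %% size w).
Proof.
move=> + + hq E; elim: j => [|j IH] hj hl i hi; first by lia.
case: (ltngtP i j.+1) => hij; [by apply: IH; lia | by lia | subst i].
have run_s i : 0 < i <= j -> letter w ((s + i) %% size w).
  by move=> hi'; rewrite modn_small; [apply: letter_run | ]; rewrite size_run_word; lia.
have E' : bview G (j.*2.+1 + (l - j.*2.+1)) (node q false) =
          bview G (j.*2.+1 + (l - j.*2.+1)) (node s false) by rewrite subnKC //; lia.
have := @bview_iter_next0 G (@wdeg_pos w) _ _ _ _ E'.
have hl' : j.*2 < l by lia.
rewrite (iter_next0_run hq (IH (ltnW hj) hl')).
rewrite (iter_next0_run (negbT letter_anchor) run_s) addnS.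
rewrite (modn_small (_ : (s + j).+1 < size w)); last by rewrite size_run_word; lia.
move=> /bview_eq_deg /=; rewrite !wdegE [letter w (s + j).+1]letter_run.
  by case: (letter w _).
by rewrite size_run_word; lia.
Qed.

Lemma run_word_feasible : feasible G.
Proof.
have L_gt2 : 2 < size w by rewrite size_run_word; lia.
have hs : s < size w by rewrite size_run_word; lia.
apply: (@feasible_of_anchor G (@wdeg_pos w) (wgraph_well_formed L_gt2)
          (node s false) m.*2.+1).
  by move=> u hu; apply: iter_next0_to_core.
move=> x l; rewrite -(nodeK x) /= node_lt => hx hl E.
have [et eq] := bview_anchor_core E; rewrite et in E *.
by rewrite (run_start_uniq hx (negbT eq) (bview_anchor_run (leqnn m) hl (negbT eq) E)).
Qed.

End RunWord.

Lemma size_flatten_nseq (T : Type) K (x : seq T) : size (flatten (nseq K x)) = K * size x.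
Proof. by rewrite size_flatten /shape map_nseq sumn_nseq mulnC. Qed.

Lemma nth_flatten_nseq (T : Type) (d : T) K (x : seq T) q : q < K * size x ->
  nth d (flatten (nseq K x)) q = nth d x (q %% size x).
Proof.
elim: K q => [|K IH] q //=; rewrite mulSn nth_cat => hq.
case: ltnP => h; first by rewrite modn_small.
rewrite IH; last by lia.
by rewrite -[in RHS](subnK h) modnDr.
Qed.

Section Periodic.
Variables (u t : seq bool) (K : nat).
Local Notation N := (size u).
Local Notation v := (flatten (nseq K u) ++ t).
Hypothesis u_gt0 : 0 < N.

Definition fold_node x := node (x./2 %% N) (odd x).

Lemma fold_node_node q b : fold_node (node q b) = node (q %% N) b.
Proof. by rewrite /fold_node node_half node_odd. Qed.

Lemma letter_periodic q : q < K * N -> letter v q = letter u (q %% N).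
Proof. by move=> h; rewrite /letter nth_cat size_flatten_nseq h nth_flatten_nseq. Qed.

(* Away from the ends of the periodic prefix, [fold_node] is a local
   isomorphism from [wgraph v] onto [wgraph u], moving positions by at most 1. *)
Lemma wgraph_periodic_nbr q b : 0 < q -> q.+1 < K * N ->
  wdeg v (node q b) = wdeg u (fold_node (node q b)) /\
  forall i, i < wdeg v (node q b) ->
    wnbr u (fold_node (node q b)) i =
      (fold_node (wnbr v (node q b) i).1, (wnbr v (node q b) i).2) /\
    q <= ((wnbr v (node q b) i).1)./2 + 1 /\ ((wnbr v (node q b) i).1)./2 <= q.+1.
Proof.
move=> q_pos q_lt; have size_v : size v = K * N + size t by rewrite size_cat size_flatten_nseq.
have next_v : cnext v q = q.+1 by rewrite /cnext modn_small // size_v; lia.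
have prev_v : cprev v q = q.-1.
  rewrite /cprev; have -> : q + (size v).-1 = q.-1 + size v by rewrite size_v; lia.
  by rewrite modnDr modn_small // size_v; lia.
have next_u : cnext u (q %% N) = q.+1 %% N by rewrite cnext_mod.
have prev_u : cprev u (q %% N) = q.-1 %% N.
  rewrite /cprev modnDml; have -> : q + N.-1 = q.-1 + N by lia.
  by rewrite modnDr.
have l0 : letter u (q %% N) = letter v q by rewrite letter_periodic //; lia.
have l1 : letter u (q.-1 %% N) = letter v q.-1 by rewrite letter_periodic //; lia.
rewrite fold_node_node !wdegE l0; split => // i hi.
rewrite !wnbrE next_u prev_u l0 next_v prev_v l1.
case: b hi; case: (letter v q) => hi.
- case: i hi => [|i] _ /=; rewrite ?fold_node_node ?node_half; split => //; lia.
- case: i hi => [|i] // _ /=; rewrite ?fold_node_node ?node_half; split => //; lia.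
- case: i hi => [|[|i]] // _ /=; rewrite ?fold_node_node ?node_half; split => //; lia.
- case: i hi => [|[|[|i]]] // _ /=; rewrite ?fold_node_node ?node_half; split => //; lia.
Qed.

Lemma bview_periodic r x : r < x./2 -> x./2 + r + 2 <= K * N ->
  bview (wgraph v) r x = bview (wgraph u) r (fold_node x).
Proof.
elim: r x => [|r IH] x h1 h2; have h3 : (x./2).+1 < K * N by lia.
  by rewrite -(nodeK x) /=; have [-> _] := wgraph_periodic_nbr (odd x) h1 h3.
have [|ed en] := wgraph_periodic_nbr (odd x) _ h3; first by lia.
rewrite -(nodeK x) /= -ed; congr VNode; apply/eq_in_map => i.
rewrite mem_iota add0n => /andP [_ hi].
have [-> [b1 b2]] := en i hi.
by rewrite /= IH //; lia.
Qed.

Lemma outputs_periodic (A : algorithm) adv a r out :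
  r < a -> a * N + r + 2 <= K * N ->
  outputs_at A adv (wgraph u) (node 0 false) r out ->
  outputs A adv (wgraph v) (node (a * N) false) out.
Proof.
move=> ha hK; apply: outputs_of_bview_eq => r' hr'.
rewrite bview_periodic ?node_half ?fold_node_node ?modnMl //; nia.
Qed.

End Periodic.

Lemma elects_outputs_inj A adv G x y out : well_formed G -> elects A adv G ->
  x < pg_n G -> y < pg_n G ->
  outputs A adv G x out -> outputs A adv G y out -> x = y.
Proof.
move=> wf [leader [_ el]] hx hy Ox Oy.
have [ox [wx [Ox' [Wx [_ Lx]]]]] := el x hx.
have [oy [wy [Oy' [Wy [_ Ly]]]]] := el y hy.
rewrite -(outputs_uniq Ox Ox') in Wx; rewrite -(outputs_uniq Oy Oy') in Wy.
by apply: walk_source_inj wf hx hy Wx Wy _; rewrite Lx Ly.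
Qed.

Fixpoint bool_seqs b : seq (seq bool) :=
  if b is b'.+1 then
    [::] :: [seq true :: c | c <- bool_seqs b'] ++ [seq false :: c | c <- bool_seqs b']
  else [:: [::]].

Lemma mem_bool_seqs b c : size c <= b -> c \in bool_seqs b.
Proof.
elim: b c => [|b IH] [|x c] //= h.
rewrite in_cons mem_cat; apply/orP; right; apply/orP.
by case: x; [left | right]; apply: map_f; apply: IH.
Qed.

Lemma exists_output_round_bound (A : algorithm) (advs : seq (seq bool)) G v :
  exists R, forall adv r out, adv \in advs -> outputs_at A adv G v r out -> r <= R.
Proof.
elim: advs => [|adv advs [R HR]]; first by exists 0.
case: (classic (exists r out, outputs_at A adv G v r out)) => [[r0 [o0 O0]]|none].
- exists (maxn R r0) => adv' r out; rewrite in_cons => /orP [/eqP -> O|hadv O].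
  + by have [-> _] := outputs_at_uniq O O0; lia.
  + by have := HR _ _ _ hadv O; lia.
- exists R => adv' r out; rewrite in_cons => /orP [/eqP -> O|hadv O].
  + by case: none; exists r, out.
  + exact: HR hadv O.
Qed.

Lemma pigeonhole_nat (T : eqType) (f : nat -> T) (s : seq T) :
  (forall n, f n \in s) -> exists i j, i < j /\ f i = f j.
Proof.
move=> fs; pose fs' := [seq f n | n <- iota 0 (size s).+1].
have sub : {subset fs' <= s} by move=> _ /mapP [n _ ->].
have : ~~ uniq fs'.
  by apply/negP => /uniq_leq_size/(_ sub); rewrite size_map size_iota ltnn.
case/(uniqPn (f 0)) => i [j [hij]]; rewrite size_map size_iota => hj.
have hi : i < (size s).+1 by lia.
by rewrite !(nth_map 0) ?size_iota // !nth_iota // !add0n => e; exists i, j.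
Qed.

Section Construction.
Variables (A : algorithm) (b : nat).

Definition round_bound (w : seq bool) : nat :=
  proj1_sig (constructive_indefinite_description _
    (exists_output_round_bound A (bool_seqs b) (wgraph w) (node 0 false))).

Lemma round_boundP w adv r out : adv \in bool_seqs b ->
  outputs_at A adv (wgraph w) (node 0 false) r out -> r <= round_bound w.
Proof. by rewrite /round_bound; case: constructive_indefinite_description => R HR; apply: HR. Qed.

Definition copies w := (round_bound w).*2 + 4.

Fixpoint word n : seq bool :=
  if n is n'.+1 then
    let u := word n' in flatten (nseq (copies u) u) ++ false :: nseq (copies u * size u).+1 true
  else [:: false; false; true; true].

Lemma word_shape n : exists W m,
  [/\ word n = W ++ false :: nseq m true, 0 < size W < m & head true W = false].
Proof.
elim: n => [|n [W [m [E Wm W0]]]]; first by exists [:: false], 2.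
exists (flatten (nseq (copies (word n)) (word n))), (copies (word n) * size (word n)).+1.
have hs : 0 < size (word n) by rewrite E size_cat /=; lia.
split => //; first by rewrite size_flatten_nseq /copies; nia.
by rewrite /copies addn4 /= E; case: W Wm W0 {E hs}.
Qed.

Lemma word_size_gt0 n : 0 < size (word n).
Proof. by have [W [m [-> _ _]]] := word_shape n; rewrite size_cat /=; lia. Qed.

Lemma word_feasible n : feasible (wgraph (word n)).
Proof. by have [W [m [-> Wm W0]]] := word_shape n; apply: run_word_feasible. Qed.

Lemma word_prefix i j : i < j ->
  exists t, word j = flatten (nseq (copies (word i)) (word i)) ++ t.
Proof.
elim: j => // j IH; rewrite ltnS leq_eqVlt => /orP [/eqP ->|/IH [t Ht]]; first by eexists.
by rewrite /= /copies addn4 /= {1}Ht -!catA; eexists.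
Qed.

(* Copies [r + 1] and [r + 2] of [word i] inside [word j] start at nodes that
   cannot be told apart from node 0 of [wgraph (word i)] before round [r]. *)
Lemma word_election_conflict i j adv : i < j -> adv \in bool_seqs b ->
  elects A adv (wgraph (word i)) -> ~ elects A adv (wgraph (word j)).
Proof.
move=> hij hadv [ld [_ el_i]] el_j.
have [t Ht] := word_prefix hij; have hN := word_size_gt0 i.
set u := word i in el_i Ht hN *.
have [|out [_ [[r Or] _]]] := el_i (node 0 false); first by rewrite /= node_lt.
have hr : r.*2 + 4 <= copies u by have := round_boundP hadv Or; rewrite /copies -/u; lia.
have copy_outputs a : r < a -> a * size u + r + 2 <= copies u * size u ->
    node (a * size u) false < pg_n (wgraph (word j)) /\
    outputs A adv (wgraph (word j)) (node (a * size u) false) out.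
  move=> ha hK; rewrite Ht; split; last exact: outputs_periodic Or.
  by rewrite /= node_lt size_cat size_flatten_nseq; lia.
have k1 : r.+1 * size u + r + 2 <= copies u * size u by nia.
have k2 : r.+2 * size u + r + 2 <= copies u * size u by nia.
have [x1 O1] := copy_outputs r.+1 (ltnSn r) k1.
have [x2 O2] := copy_outputs r.+2 (leqnSn r.+1) k2.
have [wf_j _] := word_feasible j.
have [e _] := node_inj (elects_outputs_inj wf_j el_j x1 x2 O1 O2).
by move: e; rewrite -[r.+2]addn1 mulnDl mul1n; lia.
Qed.

End Construction.

Theorem proposition7 :
  forall b : nat,
    ~ (exists (A : algorithm) (adv : pgraph -> seq bool),
         (forall G, feasible G -> size (adv G) <= b) /\
         (forall G, feasible G -> elects A (adv G) G)).
Proof.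
move=> b [A [adv [adv_size adv_elects]]].
pose advice n := adv (wgraph (word A b n)).
have advice_mem n : advice n \in bool_seqs b.
  exact/mem_bool_seqs/adv_size/word_feasible.
have [i [j [hij same]]] := pigeonhole_nat advice_mem.
apply: (word_election_conflict hij (advice_mem i)).
  exact/adv_elects/word_feasible.
by rewrite same; apply/adv_elects/word_feasible.
Qed.
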